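(* Let $i=\lambda x.x$ and $\Omega=(\lambda x.x\,x)(\lambda x.x\,x)$. Then $\mathcal{S}k.i \simeq_{\mathrm{ctx}} (\mathcal{S}k.i)\,\Omega$, but $\mathcal{S}k.i \not\sim (\mathcal{S}k.i)\,\Omega$.
   Context: The calculus $\lambda_{\mathcal S}$. Terms: $t ::= x \mid \lambda x.t \mid t\,t \mid \mathcal{S}k.t \mid \langle t\rangle$ (shift and reset); values: $v ::= \lambda x.t \mid x$. $\lambda x.t$ binds $x$, $\mathcal{S}k.t$ binds $k$; terms up to $\alpha$-conversion; capture-avoiding substitution $t\{v/x\}$. Pure contexts $F ::= [\,] \mid v\,F \mid F\,t$; evaluation contexts $E ::= [\,] \mid v\,E \mid E\,t \mid \langle E\rangle$; general contexts $C ::= [\,] \mid \lambda x.C \mid t\,C \mid C\,t \mid \mathcal{S}k.C \mid \langle C\rangle$. Reduction: $E[(\lambda x.t)\,v] \to E[t\{v/x\}]$; $E[\langle F[\mathcal{S}k.t]\rangle] \to E[\langle t\{\lambda x.\langle F[x]\rangle/k\}\rangle]$ ($x\notin\mathrm{fv}(F)$); $E[\langle v\rangle]\to E[v]$. $t\Downarrow t'$ iff $t\to^*t'$ and $t'$ irreducible. Stuck: not a value and irreducible; normal form: value or stuck; control stuck: $F[\mathcal{S}k.t]$; open stuck: $E[x\,v]$. Fresh: not free in the terms/contexts considered. $t_0\simeq_{\mathrm{ctx}}t_1$ iff for every context $C$ with $C[t_0],C[t_1]$ closed: $C[t_0]\Downarrow$ a value implies $C[t_1]\Downarrow$ a value;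 $C[t_0]\Downarrow$ a control stuck term implies $C[t_1]\Downarrow$ a control stuck term; and conversely. Normal form bisimilarity $\sim$: for a relation $\mathcal R$ on terms, extend to evaluation contexts by $E_0\mathrel{\mathcal R}E_1$ iff either $E_0=E_0'[\langle F_0\rangle]$, $E_1=E_1'[\langle F_1\rangle]$ ($F_i$ pure) with $E_0'[x]\mathrel{\mathcal R}E_1'[x]$ and $\langle F_0[x]\rangle\mathrel{\mathcal R}\langle F_1[x]\rangle$ ($x$ fresh), or $E_0=F_0$, $E_1=F_1$ pure with $F_0[x]\mathrel{\mathcal R}F_1[x]$ ($x$ fresh). $v\mathbin{@}y$ is $x\,y$ if $v=x$, $t\{y/x\}$ if $v=\lambda x.t$. $\mathcal R^{\mathrm{nf}}$: $v_0\mathrel{\mathcal R^{\mathrm{nf}}}v_1$ if $v_0\mathbin{@}x\mathrel{\mathcal R}v_1\mathbin{@}x$ ($x$ fresh); $F_0[\mathcal{S}k.t_0]\mathrel{\mathcal R^{\mathrm{nf}}}F_1[\mathcal{S}k.t_1]$ if $F_0\mathrel{\mathcal R}F_1$ and $\langle t_0\rangle\mathrel{\mathcal R}\langle t_1\rangle$; $E_0[x\,v_0]\mathrel{\mathcal R^{\mathrm{nf}}}E_1[x\,v_1]$ if $E_0\mathrel{\mathcal R}E_1$ and $v_0\mathrel{\mathcal R^{\mathrm{nf}}}v_1$. $\mathcal R$ is a normal form simulation if $t_0\mathrel{\mathcal R}t_1$, $t_0\Downarrow t_0'$ imply $t_1\Downarrow t_1'$ with $t_0'\mathrel{\mathcal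 R^{\mathrm{nf}}}t_1'$; a bisimulation if $\mathcal R$ and $\mathcal R^{-1}$ are simulations; $\sim$ is the largest one. *)

(* The calculus lambda_S (shift/reset) in locally nameless
   representation: bound variables are de Bruijn indices (so terms are
   identified up to alpha-conversion), free variables are names (nat). *)
From Stdlib Require Import List Arith.
Import ListNotations.

Inductive term : Type :=
| BVar  (n : nat)
| FVar  (x : nat)
| Lam   (t : term)
| App   (t u : term)
| Shift (t : term)         (* S k. t  binds index 0 (= k) in t *)
| Reset (t : term).

Fixpoint open_rec (k : nat) (u : term) (t : term) : term :=
  match t with
  | BVar n => if Nat.eqb n k then u else BVar n
  | FVar x => FVar x
  | Lam t1 => Lam (open_rec (S k) u t1)
  | App t1 t2 => App (open_rec k u t1) (open_rec k u t2)
  | Shift t1 => Shift (open_rec (S k) u t1)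
  | Reset t1 => Reset (open_rec k u t1)
  end.
Definition open (t u : term) : term := open_rec 0 u t.

Fixpoint close_rec (k : nat) (x : nat) (t : term) : term :=
  match t with
  | BVar n => BVar n
  | FVar y => if Nat.eqb y x then BVar k else FVar y
  | Lam t1 => Lam (close_rec (S k) x t1)
  | App t1 t2 => App (close_rec k x t1) (close_rec k x t2)
  | Shift t1 => Shift (close_rec (S k) x t1)
  | Reset t1 => Reset (close_rec k x t1)
  end.
Definition close (x : nat) (t : term) : term := close_rec 0 x t.

Fixpoint fv (t : term) : list nat :=
  match t with
  | BVar _ => []
  | FVar x => [x]
  | Lam t1 => fv t1
  | App t1 t2 => fv t1 ++ fv t2
  | Shift t1 => fv t1
  | Reset t1 => fv t1
  end.

Fixpoint lc_at (k : nat) (t : term) : Prop :=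
  match t with
  | BVar n => n < k
  | FVar _ => True
  | Lam t1 => lc_at (S k) t1
  | App t1 t2 => lc_at k t1 /\ lc_at k t2
  | Shift t1 => lc_at (S k) t1
  | Reset t1 => lc_at k t1
  end.
Definition lc (t : term) : Prop := lc_at 0 t.
Definition closed (t : term) : Prop := lc t /\ fv t = [].

Definition is_value (t : term) : Prop :=
  match t with
  | Lam _ => True
  | FVar _ => True
  | _ => False
  end.

(* Pure contexts F ::= [] | v F | F t *)
Inductive pctx : Type :=
| PHole
| PAppR (v : term) (F : pctx)
| PAppL (F : pctx) (t : term).

Fixpoint plugP (F : pctx) (t : term) : term :=
  match F with
  | PHole => t
  | PAppR v F1 => App v (plugP F1 t)
  | PAppL F1 u => App (plugP F1 t) u
  end.

Fixpoint pctx_ok (F : pctx) : Prop :=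
  match F with
  | PHole => True
  | PAppR v F1 => is_value v /\ pctx_ok F1
  | PAppL F1 _ => pctx_ok F1
  end.

Fixpoint fvP (F : pctx) : list nat :=
  match F with
  | PHole => []
  | PAppR v F1 => fv v ++ fvP F1
  | PAppL F1 u => fvP F1 ++ fv u
  end.

(* Evaluation contexts E ::= [] | v E | E t | <E> *)
Inductive ectx : Type :=
| EHole
| EAppR (v : term) (E : ectx)
| EAppL (E : ectx) (t : term)
| EReset (E : ectx).

Fixpoint plugE (E : ectx) (t : term) : term :=
  match E with
  | EHole => t
  | EAppR v E1 => App v (plugE E1 t)
  | EAppL E1 u => App (plugE E1 t) u
  | EReset E1 => Reset (plugE E1 t)
  end.

Fixpoint ectx_ok (E : ectx) : Prop :=
  match E with
  | EHole => True
  | EAppR v E1 => is_value v /\ ectx_ok E1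
  | EAppL E1 _ => ectx_ok E1
  | EReset E1 => ectx_ok E1
  end.

Fixpoint fvE (E : ectx) : list nat :=
  match E with
  | EHole => []
  | EAppR v E1 => fv v ++ fvE E1
  | EAppL E1 u => fvE E1 ++ fv u
  | EReset E1 => fvE E1
  end.

Fixpoint ecomp (E E' : ectx) : ectx :=
  match E with
  | EHole => E'
  | EAppR v E1 => EAppR v (ecomp E1 E')
  | EAppL E1 u => EAppL (ecomp E1 E') u
  | EReset E1 => EReset (ecomp E1 E')
  end.

Fixpoint ectx_of_pctx (F : pctx) : ectx :=
  match F with
  | PHole => EHole
  | PAppR v F1 => EAppR v (ectx_of_pctx F1)
  | PAppL F1 u => EAppL (ectx_of_pctx F1) u
  end.

(* General contexts C ::= [] | \x.C | t C | C t | S k.C | <C>, with named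
   binders that may capture free variables of the plugged term. *)
Inductive gctx : Type :=
| GHole
| GLam (x : nat) (C : gctx)
| GAppR (t : term) (C : gctx)
| GAppL (C : gctx) (t : term)
| GShift (k : nat) (C : gctx)
| GReset (C : gctx).

Fixpoint plugG (C : gctx) (t : term) : term :=
  match C with
  | GHole => t
  | GLam x C1 => Lam (close x (plugG C1 t))
  | GAppR u C1 => App u (plugG C1 t)
  | GAppL C1 u => App (plugG C1 t) u
  | GShift k C1 => Shift (close k (plugG C1 t))
  | GReset C1 => Reset (plugG C1 t)
  end.

Fixpoint gctx_ok (C : gctx) : Prop :=
  match C with
  | GHole => True
  | GLam _ C1 => gctx_ok C1
  | GAppR u C1 => lc u /\ gctx_ok C1
  | GAppL C1 u => gctx_ok C1 /\ lc u
  | GShift _ C1 => gctx_ok C1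
  | GReset C1 => gctx_ok C1
  end.

Inductive step : term -> term -> Prop :=
| step_beta : forall E t v, ectx_ok E -> is_value v ->
    step (plugE E (App (Lam t) v)) (plugE E (open t v))
| step_shift : forall E F t, ectx_ok E -> pctx_ok F ->
    (* E[<F[S k.t]>] -> E[< t{\x.<F[x]>/k} >]; the index 0 below is bound by
       the new lambda, so x is automatically not free in F *)
    step (plugE E (Reset (plugP F (Shift t))))
         (plugE E (Reset (open t (Lam (Reset (plugP F (BVar 0)))))))
| step_reset : forall E v, ectx_ok E -> is_value v ->
    step (plugE E (Reset v)) (plugE E v).

Inductive steps : term -> term -> Prop :=
| steps_refl : forall t, steps t t
| steps_step : forall t t' t'', step t t' -> steps t' t'' -> steps t t''.

Definition irreducible (t : term) : Prop := ~ exists t', step t t'.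

Definition eval (t t' : term) : Prop := steps t t' /\ irreducible t'.

Definition control_stuck (t : term) : Prop :=
  exists F s, pctx_ok F /\ t = plugP F (Shift s).

Definition ctx_equiv (t0 t1 : term) : Prop :=
  forall C : gctx, gctx_ok C ->
    closed (plugG C t0) -> closed (plugG C t1) ->
    ((exists v, eval (plugG C t0) v /\ is_value v) <->
     (exists v, eval (plugG C t1) v /\ is_value v)) /\
    ((exists u, eval (plugG C t0) u /\ control_stuck u) <->
     (exists u, eval (plugG C t1) u /\ control_stuck u)).

Definition rel := term -> term -> Prop.

Definition ectx_rel (R : rel) (E0 E1 : ectx) : Prop :=
  (exists E0' F0 E1' F1,
      pctx_ok F0 /\ pctx_ok F1 /\
      E0 = ecomp E0' (EReset (ectx_of_pctx F0)) /\
      E1 = ecomp E1' (EReset (ectx_of_pctx F1)) /\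
      exists x, ~ In x (fvE E0) /\ ~ In x (fvE E1) /\
        R (plugE E0' (FVar x)) (plugE E1' (FVar x)) /\
        R (Reset (plugP F0 (FVar x))) (Reset (plugP F1 (FVar x))))
  \/
  (exists F0 F1,
      pctx_ok F0 /\ pctx_ok F1 /\
      E0 = ectx_of_pctx F0 /\ E1 = ectx_of_pctx F1 /\
      exists x, ~ In x (fvE E0) /\ ~ In x (fvE E1) /\
        R (plugP F0 (FVar x)) (plugP F1 (FVar x))).

Definition app_at (v : term) (y : nat) : term :=
  match v with
  | FVar x => App (FVar x) (FVar y)
  | Lam t => open t (FVar y)
  | _ => App v (FVar y)   (* not used: v is always a value *)
  end.

Definition nf_val (R : rel) (v0 v1 : term) : Prop :=
  is_value v0 /\ is_value v1 /\
  exists x, ~ In x (fv v0) /\ ~ In x (fv v1) /\ R (app_at v0 x) (app_at v1 x).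

Definition nf_rel (R : rel) (t0 t1 : term) : Prop :=
  nf_val R t0 t1
  \/
  (exists F0 s0 F1 s1,
      pctx_ok F0 /\ pctx_ok F1 /\
      t0 = plugP F0 (Shift s0) /\ t1 = plugP F1 (Shift s1) /\
      ectx_rel R (ectx_of_pctx F0) (ectx_of_pctx F1) /\
      exists k, ~ In k (fv s0) /\ ~ In k (fv s1) /\
        R (Reset (open s0 (FVar k))) (Reset (open s1 (FVar k))))
  \/
  (exists E0 E1 x v0 v1,
      ectx_ok E0 /\ ectx_ok E1 /\
      t0 = plugE E0 (App (FVar x) v0) /\ t1 = plugE E1 (App (FVar x) v1) /\
      ectx_rel R E0 E1 /\ nf_val R v0 v1).

Definition nf_simulation (R : rel) : Prop :=
  forall t0 t1, R t0 t1 -> forall t0', eval t0 t0' ->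
    exists t1', eval t1 t1' /\ nf_rel R t0' t1'.

Definition nf_bisimulation (R : rel) : Prop :=
  nf_simulation R /\ nf_simulation (fun a b => R b a).

Definition nf_bisimilar (t0 t1 : term) : Prop :=
  exists R, nf_bisimulation R /\ R t0 t1.

Definition tI : term := Lam (BVar 0).
Definition tOmega : term :=
  App (Lam (App (BVar 0) (BVar 0))) (Lam (App (BVar 0) (BVar 0))).

(* Contextual equivalence: a shift whose body ignores the captured
   continuation behaves the same in every context whether or not an argument
   u is waiting for its result, because capturing that continuation throws
   the pending application away.  So the congruence generated by the pair
   (S k.t, (S k.t) u) is a lock-step bisimulation for the reduction relation
   that preserves values and control-stuck terms.

   Normal form bisimilarity fails because it compares the two stuck terms
   through their pure contexts [ ] and [ ] u, hence requires x and x u to be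
   bisimilar for a fresh x; with u = Omega the value x must be matched by the
   divergent x Omega. *)

From Stdlib Require Import List Arith Lia.
Import ListNotations.

Lemma open_rec_lc_at k t : lc_at k t -> forall j v, k <= j -> open_rec j v t = t.
Proof.
  revert k; induction t as [n | x | t IH | t1 IH1 t2 IH2 | t IH | t IH];
    cbn; intros k Hlc j v Hkj.
  - destruct (Nat.eqb_spec n j); [lia | reflexivity].
  - reflexivity.
  - rewrite (IH (S k)); auto with arith.
  - destruct Hlc; rewrite (IH1 k), (IH2 k); auto.
  - rewrite (IH (S k)); auto with arith.
  - rewrite (IH k); auto.
Qed.

Lemma close_rec_fresh x t : ~ In x (fv t) -> forall k, close_rec k x t = t.
Proof.
  induction t as [n | y | t IH | t1 IH1 t2 IH2 | t IH | t IH]; cbn; intros Hx k;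
    rewrite ?in_app_iff in Hx.
  - reflexivity.
  - destruct (Nat.eqb_spec y x); [tauto | reflexivity].
  - rewrite IH; auto.
  - rewrite IH1, IH2; auto.
  - rewrite IH; auto.
  - rewrite IH; auto.
Qed.

Definition redex (r : term) : Prop :=
  match r with
  | App (Lam _) v => is_value v
  | Reset _ => True
  | _ => False
  end.

Lemma step_decompose t t' :
  step t t' -> exists E r, ectx_ok E /\ redex r /\ t = plugE E r.
Proof. destruct 1; do 2 eexists; repeat split; cbn; eauto. Qed.

Lemma redex_not_value r : redex r -> ~ is_value r.
Proof. destruct r; cbn; tauto. Qed.

Lemma plugP_shift_not_value F s : ~ is_value (plugP F (Shift s)).
Proof. destruct F; cbn; tauto. Qed.

Lemma plugE_value E r : is_value (plugE E r) -> E = EHole /\ is_value r.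
Proof. destruct E; cbn; tauto. Qed.

Lemma plugE_shift E r s : plugE E r = Shift s -> E = EHole.
Proof. destruct E; cbn; congruence. Qed.

Lemma plugP_shift F r s : plugP F r = Shift s -> F = PHole.
Proof. destruct F; cbn; congruence. Qed.

Lemma value_irreducible v : is_value v -> irreducible v.
Proof.
  intros Hv [v' Hstep].
  destruct (step_decompose _ _ Hstep) as [E [r [_ [Hr ->]]]].
  apply plugE_value in Hv as [_ Hv].
  exact (redex_not_value r Hr Hv).
Qed.

Lemma plugE_redex_neq_plugP_shift E r F s :
  ectx_ok E -> redex r -> pctx_ok F -> plugE E r <> plugP F (Shift s).
Proof.
  revert E; induction F as [| v F IH | F IH w]; cbn; intros E HE Hr HF Heq.
  - rewrite (plugE_shift E r s Heq) in Heq; cbn in Heq; subst r; exact Hr.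
  - destruct HF as [Hv HF].
    destruct E as [| w E | E w | E]; cbn in Heq, HE; try discriminate.
    + subst r; destruct v; try exact Hr.
      exact (plugP_shift_not_value F s Hr).
    + injection Heq as _ Heq; exact (IH E (proj2 HE) Hr HF Heq).
    + injection Heq as Heq _.
      apply (redex_not_value r Hr), (plugE_value E).
      rewrite Heq; exact Hv.
  - destruct E as [| v E | E v | E]; cbn in Heq, HE; try discriminate.
    + subst r; destruct F; cbn in Hr; try discriminate; tauto.
    + injection Heq as Heq _.
      apply (plugP_shift_not_value F s); rewrite <- Heq; exact (proj1 HE).
    + injection Heq as Heq _; exact (IH E HE Hr HF Heq).
Qed.

Lemma control_stuck_irreducible F s : pctx_ok F -> irreducible (plugP F (Shift s)).
Proof.
  intros HF [t' Hstep].
  destruct (step_decompose _ _ Hstep) as [E [r [HE [Hr Heq]]]].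
  exact (plugE_redex_neq_plugP_shift E r F s HE Hr HF (eq_sym Heq)).
Qed.

Lemma steps_irreducible t u : irreducible t -> steps t u -> u = t.
Proof. intros Hirr Hsteps; destruct Hsteps as [| t1 t2 t3 Hstep _]; [reflexivity | destruct Hirr; eauto]. Qed.

Lemma eval_irreducible t : irreducible t -> eval t t.
Proof. split; [constructor | assumption]. Qed.

Lemma self_loop_no_eval t w :
  (exists t', step t t') -> (forall t', step t t' -> t' = t) -> ~ eval t w.
Proof.
  intros Hred Hloop [Hsteps Hirr].
  induction Hsteps as [t | t1 t2 t3 Hstep _ IH].
  - exact (Hirr Hred).
  - apply Hloop in Hstep; subst t2; auto.
Qed.

Lemma plugE_redex_app_omega E r x :
  ectx_ok E -> redex r -> plugE E r = App (FVar x) tOmega ->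
  E = EAppR (FVar x) EHole /\ r = tOmega.
Proof.
  intros HE Hr Heq.
  destruct E as [| v E | E v | E]; cbn in Heq; try discriminate.
  - subst r; destruct Hr.
  - injection Heq as -> Heq.
    destruct E as [| w E | E w | E]; cbn in Heq; try discriminate.
    + subst r; split; reflexivity.
    + injection Heq as _ Heq.
      destruct (redex_not_value r Hr), (plugE_value E r); rewrite ?Heq; cbn; auto.
    + injection Heq as Heq _.
      destruct (redex_not_value r Hr), (plugE_value E r); rewrite ?Heq; cbn; auto.
  - injection Heq as Heq _.
    destruct (redex_not_value r Hr), (plugE_value E r); rewrite ?Heq; cbn; auto.
Qed.

Lemma app_omega_step x t' : step (App (FVar x) tOmega) t' -> t' = App (FVar x) tOmega.
Proof.
  intros Hstep; remember (App (FVar x) tOmega) as w eqn:Hw.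
  destruct Hstep as [E s v HE Hv | E F s HE HF | E v HE Hv].
  - destruct (plugE_redex_app_omega E (App (Lam s) v) x HE Hv Hw) as [-> Hr].
    injection Hr as -> ->; reflexivity.
  - destruct (plugE_redex_app_omega E (Reset _) x HE I Hw) as [_ Hr]; discriminate.
  - destruct (plugE_redex_app_omega E (Reset v) x HE I Hw) as [_ Hr]; discriminate.
Qed.

Lemma app_omega_diverges x w : ~ eval (App (FVar x) tOmega) w.
Proof.
  apply self_loop_no_eval; [| exact (app_omega_step x)].
  exists (App (FVar x) tOmega).
  exact (step_beta (EAppR (FVar x) EHole) (App (BVar 0) (BVar 0))
           (Lam (App (BVar 0) (BVar 0))) (conj I I) I).
Qed.

(** * Lock-step bisimulations and contextual equivalence *)

Definition step_simulation (R : rel) : Prop :=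
  forall t0 t0' t1, step t0 t0' -> R t0 t1 -> exists t1', step t1 t1' /\ R t0' t1'.

Lemma eval_step_bisimulation (R : rel) :
  step_simulation R -> step_simulation (fun a b => R b a) ->
  forall t0 t1 v0, R t0 t1 -> eval t0 v0 -> exists v1, eval t1 v1 /\ R v0 v1.
Proof.
  intros Hfwd Hbwd t0 t1 v0 HR [Hsteps Hirr].
  revert t1 HR; induction Hsteps as [t0 | t0 t0' v0 Hstep _ IH]; intros t1 HR.
  - exists t1; split; [| exact HR].
    apply eval_irreducible; intros [t1' Hstep1].
    destruct (Hbwd _ _ _ Hstep1 HR) as [t0' [Hstep0 _]]; eauto.
  - destruct (Hfwd _ _ _ Hstep HR) as [t1' [Hstep1 HR']].
    destruct (IH Hirr _ HR') as [v1 [[Hsteps1 Hirr1] HRv]].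
    exists v1; split; [split; [econstructor; eauto | exact Hirr1] | exact HRv].
Qed.

Lemma ctx_equiv_of_step_bisimulation (R : rel) t0 t1 :
  step_simulation R -> step_simulation (fun a b => R b a) ->
  (forall a b, R a b -> is_value a <-> is_value b) ->
  (forall a b, R a b -> control_stuck a <-> control_stuck b) ->
  (forall C, R (plugG C t0) (plugG C t1)) ->
  ctx_equiv t0 t1.
Proof.
  intros Hfwd Hbwd Hval Hstuck Hctx C _ _ _.
  pose proof (Hctx C) as HR.
  split; split; intros [v [Hev Hv]].
  - destruct (eval_step_bisimulation R Hfwd Hbwd _ _ _ HR Hev) as [w [Hw Hvw]].
    exists w; split; [exact Hw | apply (Hval _ _ Hvw), Hv].
  - destruct (eval_step_bisimulation _ Hbwd Hfwd _ _ _ HR Hev) as [w [Hw Hvw]].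
    exists w; split; [exact Hw | apply (Hval _ _ Hvw), Hv].
  - destruct (eval_step_bisimulation R Hfwd Hbwd _ _ _ HR Hev) as [w [Hw Hvw]].
    exists w; split; [exact Hw | apply (Hstuck _ _ Hvw), Hv].
  - destruct (eval_step_bisimulation _ Hbwd Hfwd _ _ _ HR Hev) as [w [Hw Hvw]].
    exists w; split; [exact Hw | apply (Hstuck _ _ Hvw), Hv].
Qed.

(** * A shift that discards its continuation *)

Section DiscardingShift.

(* [t] is the body of [S k.t], with k as bound index 0, so [closed t] says in
   particular that the continuation k is not used. *)
Variables t u : term.
Hypothesis t_closed : closed t.
Hypothesis u_closed : closed u.

Lemma open_rec_body j v : open_rec j v t = t.
Proof. apply (open_rec_lc_at 0); [apply t_closed | lia]. Qed.

Lemma open_rec_arg j v : open_rec j v u = u.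
Proof. apply (open_rec_lc_at 0); [apply u_closed | lia]. Qed.

Lemma close_rec_body k x : close_rec k x t = t.
Proof. apply close_rec_fresh; rewrite (proj2 t_closed); tauto. Qed.

Lemma close_rec_arg k x : close_rec k x u = u.
Proof. apply close_rec_fresh; rewrite (proj2 u_closed); tauto. Qed.

Inductive cong : term -> term -> Prop :=
| cong_base : cong (Shift t) (App (Shift t) u)
| cong_bvar n : cong (BVar n) (BVar n)
| cong_fvar x : cong (FVar x) (FVar x)
| cong_lam a b : cong a b -> cong (Lam a) (Lam b)
| cong_app a b c d : cong a c -> cong b d -> cong (App a b) (App c d)
| cong_shift a b : cong a b -> cong (Shift a) (Shift b)
| cong_reset a b : cong a b -> cong (Reset a) (Reset b).

Lemma cong_refl a : cong a a.
Proof. induction a; constructor; auto. Qed.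

Lemma cong_open a a' : cong a a' ->
  forall k b b', cong b b' -> cong (open_rec k b a) (open_rec k b' a').
Proof.
  induction 1; intros k v v' Hv; cbn; try (constructor; auto).
  - rewrite !open_rec_body, open_rec_arg; constructor.
  - destruct (Nat.eqb n k); [exact Hv | constructor].
Qed.

Lemma cong_close a a' : cong a a' -> forall k x, cong (close_rec k x a) (close_rec k x a').
Proof.
  induction 1; intros k y; cbn; try (constructor; auto).
  - rewrite close_rec_body, close_rec_arg; constructor.
  - destruct (Nat.eqb x y); constructor.
Qed.

Lemma cong_plugG C : cong (plugG C (Shift t)) (plugG C (App (Shift t) u)).
Proof. induction C; cbn; try constructor; unfold close; auto using cong_refl, cong_close. Qed.

Lemma cong_is_value a b : cong a b -> is_value a <-> is_value b.
Proof. destruct 1; cbn; tauto. Qed.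

Ltac invert_cong H := inversion H; subst; eauto 6.

Lemma cong_app_l a b c : cong (App a b) c ->
  exists c1 c2, c = App c1 c2 /\ cong a c1 /\ cong b c2.
Proof. intros H; invert_cong H. Qed.

Lemma cong_app_r a b c : cong c (App a b) ->
  (exists c1 c2, c = App c1 c2 /\ cong c1 a /\ cong c2 b) \/
  (c = Shift t /\ a = Shift t /\ b = u).
Proof. intros H; invert_cong H. Qed.

Lemma cong_lam_l a c : cong (Lam a) c -> exists b, c = Lam b /\ cong a b.
Proof. intros H; invert_cong H. Qed.

Lemma cong_lam_r a c : cong c (Lam a) -> exists b, c = Lam b /\ cong b a.
Proof. intros H; invert_cong H. Qed.

Lemma cong_reset_l a c : cong (Reset a) c -> exists b, c = Reset b /\ cong a b.
Proof. intros H; invert_cong H. Qed.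

Lemma cong_reset_r a c : cong c (Reset a) -> exists b, c = Reset b /\ cong b a.
Proof. intros H; invert_cong H. Qed.

Lemma cong_shift_l a c : cong (Shift a) c ->
  (exists b, c = Shift b /\ cong a b) \/ (a = t /\ c = App (Shift t) u).
Proof. intros H; invert_cong H. Qed.

Lemma cong_shift_r a c : cong c (Shift a) -> exists b, c = Shift b /\ cong b a.
Proof. intros H; invert_cong H. Qed.

Fixpoint cong_ectx (E0 E1 : ectx) : Prop :=
  match E0, E1 with
  | EHole, EHole => True
  | EAppR v0 E0, EAppR v1 E1 => cong v0 v1 /\ cong_ectx E0 E1
  | EAppL E0 a0, EAppL E1 a1 => cong_ectx E0 E1 /\ cong a0 a1
  | EReset E0, EReset E1 => cong_ectx E0 E1
  | _, _ => False
  end.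

Fixpoint cong_pctx (F0 F1 : pctx) : Prop :=
  match F0, F1 with
  | PHole, PHole => True
  | PAppR v0 F0, PAppR v1 F1 => cong v0 v1 /\ cong_pctx F0 F1
  | PAppL F0 a0, PAppL F1 a1 => cong_pctx F0 F1 /\ cong a0 a1
  | _, _ => False
  end.

Lemma cong_plugE E0 E1 a b : cong_ectx E0 E1 -> cong a b -> cong (plugE E0 a) (plugE E1 b).
Proof.
  revert E1; induction E0; destruct E1; cbn; intros HE Hab; try tauto;
    constructor; try apply IHE0; tauto.
Qed.

Lemma cong_plugP F0 F1 a b : cong_pctx F0 F1 -> cong a b -> cong (plugP F0 a) (plugP F1 b).
Proof.
  revert F1; induction F0; destruct F1; cbn; intros HF Hab; try tauto;
    constructor; try apply IHF0; tauto.
Qed.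

Lemma cong_plugE_l E0 r0 b : ectx_ok E0 -> cong (plugE E0 r0) b ->
  exists E1 r1, b = plugE E1 r1 /\ ectx_ok E1 /\ cong_ectx E0 E1 /\ cong r0 r1.
Proof.
  revert b; induction E0 as [| v E0 IH | E0 IH a | E0 IH]; cbn; intros b HE H.
  - exists EHole, b; cbn; auto.
  - apply cong_app_l in H as [c [d [-> [Hc Hd]]]].
    destruct (IH d (proj2 HE) Hd) as [E1 [r1 [-> [HE1 [HE01 Hr]]]]].
    exists (EAppR c E1), r1; cbn; repeat split; try apply (cong_is_value _ _ Hc); tauto.
  - apply cong_app_l in H as [c [d [-> [Hc Hd]]]].
    destruct (IH c HE Hc) as [E1 [r1 [-> [HE1 [HE01 Hr]]]]].
    exists (EAppL E1 d), r1; cbn; auto.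
  - apply cong_reset_l in H as [c [-> Hc]].
    destruct (IH c HE Hc) as [E1 [r1 [-> [HE1 [HE01 Hr]]]]].
    exists (EReset E1), r1; cbn; auto.
Qed.

(* The redex hypothesis rules out the hole sitting inside the right-hand
   side (S k.t) u of the generating pair. *)
Lemma cong_plugE_r E1 r1 a : ectx_ok E1 -> redex r1 -> cong a (plugE E1 r1) ->
  exists E0 r0, a = plugE E0 r0 /\ ectx_ok E0 /\ cong_ectx E0 E1 /\ cong r0 r1.
Proof.
  revert a; induction E1 as [| v E1 IH | E1 IH b | E1 IH]; cbn; intros a HE Hr H.
  - exists EHole, a; cbn; auto.
  - apply cong_app_r in H as [[c [d [-> [Hc Hd]]]] | [_ [-> _]]];
      [| destruct HE as [[] _]].
    destruct (IH d (proj2 HE) Hr Hd) as [E0 [r0 [-> [HE0 [HE01 Hr0]]]]].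
    exists (EAppR c E0), r0; cbn; repeat split; try apply (cong_is_value _ _ Hc); tauto.
  - apply cong_app_r in H as [[c [d [-> [Hc Hd]]]] | [_ [Hs _]]].
    + destruct (IH c HE Hr Hc) as [E0 [r0 [-> [HE0 [HE01 Hr0]]]]].
      exists (EAppL E0 d), r0; cbn; auto.
    + rewrite (plugE_shift E1 r1 t Hs) in Hs; cbn in Hs; subst r1; destruct Hr.
  - apply cong_reset_r in H as [c [-> Hc]].
    destruct (IH c HE Hr Hc) as [E0 [r0 [-> [HE0 [HE01 Hr0]]]]].
    exists (EReset E0), r0; cbn; auto.
Qed.

Lemma cong_plugP_shift_l F0 s0 b : pctx_ok F0 -> cong (plugP F0 (Shift s0)) b ->
  (exists F1 s1, b = plugP F1 (Shift s1) /\ pctx_ok F1 /\ cong_pctx F0 F1 /\ cong s0 s1) \/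
  (s0 = t /\ exists F1, b = plugP F1 (Shift t) /\ pctx_ok F1).
Proof.
  revert b; induction F0 as [| v F0 IH | F0 IH a]; cbn; intros b HF H.
  - apply cong_shift_l in H as [[c [-> Hc]] | [-> ->]].
    + left; exists PHole, c; cbn; auto.
    + right; split; [reflexivity | exists (PAppL PHole u); cbn; auto].
  - apply cong_app_l in H as [c [d [-> [Hc Hd]]]].
    assert (Hvc : is_value c) by (apply (cong_is_value _ _ Hc), HF).
    destruct (IH d (proj2 HF) Hd)
      as [[F1 [s1 [-> [HF1 [HF01 Hs]]]]] | [-> [F1 [-> HF1]]]].
    + left; exists (PAppR c F1), s1; cbn; tauto.
    + right; split; [reflexivity | exists (PAppR c F1); cbn; auto].
  - apply cong_app_l in H as [c [d [-> [Hc Hd]]]].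
    destruct (IH c HF Hc) as [[F1 [s1 [-> [HF1 [HF01 Hs]]]]] | [-> [F1 [-> HF1]]]].
    + left; exists (PAppL F1 d), s1; cbn; tauto.
    + right; split; [reflexivity | exists (PAppL F1 d); cbn; auto].
Qed.

Lemma cong_plugP_shift_r F1 s1 a : pctx_ok F1 -> cong a (plugP F1 (Shift s1)) ->
  (exists F0 s0, a = plugP F0 (Shift s0) /\ pctx_ok F0 /\ cong_pctx F0 F1 /\ cong s0 s1) \/
  (s1 = t /\ exists F0, a = plugP F0 (Shift t) /\ pctx_ok F0).
Proof.
  revert a; induction F1 as [| v F1 IH | F1 IH b]; cbn; intros a HF H.
  - apply cong_shift_r in H as [c [-> Hc]].
    left; exists PHole, c; cbn; auto.
  - apply cong_app_r in H as [[c [d [-> [Hc Hd]]]] | [_ [-> _]]];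
      [| destruct HF as [[] _]].
    assert (Hvc : is_value c) by (apply (cong_is_value _ _ Hc), HF).
    destruct (IH d (proj2 HF) Hd)
      as [[F0 [s0 [-> [HF0 [HF01 Hs]]]]] | [-> [F0 [-> HF0]]]].
    + left; exists (PAppR c F0), s0; cbn; tauto.
    + right; split; [reflexivity | exists (PAppR c F0); cbn; auto].
  - apply cong_app_r in H as [[c [d [-> [Hc Hd]]]] | [-> [Hs _]]].
    + destruct (IH c HF Hc) as [[F0 [s0 [-> [HF0 [HF01 Hs]]]]] | [-> [F0 [-> HF0]]]].
      * left; exists (PAppL F0 d), s0; cbn; tauto.
      * right; split; [reflexivity | exists (PAppL F0 d); cbn; auto].
    + rewrite (plugP_shift F1 (Shift s1) t Hs) in Hs; injection Hs as ->.
      right; split; [reflexivity | exists PHole; cbn; auto].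
Qed.

Lemma open_body v : open t v = t.
Proof. apply open_rec_body. Qed.

Lemma cong_step_simulation : step_simulation cong.
Proof.
  intros a a' b Hstep H.
  destruct Hstep as [E0 s v HE0 Hv | E0 F0 s HE0 HF0 | E0 v HE0 Hv].
  - destruct (cong_plugE_l _ _ _ HE0 H) as [E1 [r1 [-> [HE1 [HE01 Hr]]]]].
    apply cong_app_l in Hr as [c [d [-> [Hc Hd]]]].
    apply cong_lam_l in Hc as [s' [-> Hs]].
    exists (plugE E1 (open s' d)); split.
    + apply step_beta; [exact HE1 | apply (cong_is_value _ _ Hd), Hv].
    + apply cong_plugE; [exact HE01 | apply cong_open; assumption].
  - destruct (cong_plugE_l _ _ _ HE0 H) as [E1 [r1 [-> [HE1 [HE01 Hr]]]]].
    apply cong_reset_l in Hr as [c [-> Hc]].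
    destruct (cong_plugP_shift_l _ _ _ HF0 Hc)
      as [[F1 [s1 [-> [HF1 [HF01 Hs]]]]] | [-> [F1 [-> HF1]]]].
    + eexists; split; [apply step_shift; assumption |].
      apply cong_plugE, cong_reset, cong_open; [assumption .. |].
      apply cong_lam, cong_reset, cong_plugP; [assumption | constructor].
    + eexists; split; [apply step_shift; assumption |].
      rewrite !open_body; apply cong_plugE, cong_reset, cong_refl; assumption.
  - destruct (cong_plugE_l _ _ _ HE0 H) as [E1 [r1 [-> [HE1 [HE01 Hr]]]]].
    apply cong_reset_l in Hr as [c [-> Hc]].
    exists (plugE E1 c); split.
    + apply step_reset; [exact HE1 | apply (cong_is_value _ _ Hc), Hv].
    + apply cong_plugE; assumption.
Qed.

Lemma cong_step_simulation_inv : step_simulation (fun a b => cong b a).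
Proof.
  intros b b' a Hstep H.
  destruct Hstep as [E1 s v HE1 Hv | E1 F1 s HE1 HF1 | E1 v HE1 Hv].
  - destruct (cong_plugE_r E1 (App (Lam s) v) _ HE1 Hv H)
      as [E0 [r0 [-> [HE0 [HE01 Hr]]]]].
    apply cong_app_r in Hr as [[c [d [-> [Hc Hd]]]] | [_ [Hs _]]]; [| discriminate].
    apply cong_lam_r in Hc as [s' [-> Hs]].
    exists (plugE E0 (open s' d)); split.
    + apply step_beta; [exact HE0 | apply (cong_is_value _ _ Hd), Hv].
    + apply cong_plugE; [exact HE01 | apply cong_open; assumption].
  - destruct (cong_plugE_r E1 (Reset _) _ HE1 I H) as [E0 [r0 [-> [HE0 [HE01 Hr]]]]].
    apply cong_reset_r in Hr as [c [-> Hc]].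
    destruct (cong_plugP_shift_r _ _ _ HF1 Hc)
      as [[F0 [s0 [-> [HF0 [HF01 Hs]]]]] | [-> [F0 [-> HF0]]]].
    + eexists; split; [apply step_shift; assumption |].
      apply cong_plugE, cong_reset, cong_open; [assumption .. |].
      apply cong_lam, cong_reset, cong_plugP; [assumption | constructor].
    + eexists; split; [apply step_shift; assumption |].
      rewrite !open_body; apply cong_plugE, cong_reset, cong_refl; assumption.
  - destruct (cong_plugE_r E1 (Reset v) _ HE1 I H) as [E0 [r0 [-> [HE0 [HE01 Hr]]]]].
    apply cong_reset_r in Hr as [c [-> Hc]].
    exists (plugE E0 c); split.
    + apply step_reset; [exact HE0 | apply (cong_is_value _ _ Hc), Hv].
    + apply cong_plugE; assumption.
Qed.

Lemma cong_control_stuck a b : cong a b -> control_stuck a <-> control_stuck b.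
Proof.
  intros H; split; intros [F [s [HF ->]]].
  - destruct (cong_plugP_shift_l _ _ _ HF H)
      as [[F1 [s1 [-> [HF1 _]]]] | [_ [F1 [-> HF1]]]]; red; eauto.
  - destruct (cong_plugP_shift_r _ _ _ HF H)
      as [[F0 [s0 [-> [HF0 _]]]] | [_ [F0 [-> HF0]]]]; red; eauto.
Qed.

Theorem discarding_shift_ctx_equiv : ctx_equiv (Shift t) (App (Shift t) u).
Proof.
  apply (ctx_equiv_of_step_bisimulation cong).
  - exact cong_step_simulation.
  - exact cong_step_simulation_inv.
  - exact cong_is_value.
  - exact cong_control_stuck.
  - exact cong_plugG.
Qed.

End DiscardingShift.

(** * Failure of normal form bisimilarity *)

Lemma shift_not_nf_bisimilar_app t u :
  (forall x w, ~ eval (App (FVar x) u) w) -> ~ nf_bisimilar (Shift t) (App (Shift t) u).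
Proof.
  intros Hdiv [R [[Hsim _] HR]].
  pose proof (control_stuck_irreducible PHole t I) as Hstuck0.
  pose proof (control_stuck_irreducible (PAppL PHole u) t I) as Hstuck1.
  destruct (Hsim _ _ HR _ (eval_irreducible _ Hstuck0)) as [b [[Hsteps _] Hnf]].
  cbn in Hsteps; rewrite (steps_irreducible _ _ Hstuck1 Hsteps) in Hnf.
  destruct Hnf as [[[] _] | [[F0 [s0 [F1 [s1 [_ [HF1 [H0 [H1 [Hctx _]]]]]]]]] | Hopen]].
  - (* both sides are control stuck, in the pure contexts [ ] and [ ] u *)
    rewrite (plugP_shift F0 (Shift s0) t (eq_sym H0)) in Hctx.
    destruct F1 as [| v F1 | F1 a]; cbn in H1; try discriminate.
    + injection H1 as <- _; destruct HF1 as [[] _].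
    + injection H1 as H1 <-.
      rewrite (plugP_shift F1 (Shift s1) t (eq_sym H1)) in Hctx.
      destruct Hctx as [[E0' [G0 [E1' [G1 [_ [_ [HE0 _]]]]]]] |
                        [G0 [G1 [_ [_ [HG0 [HG1 [x [_ [_ Hx]]]]]]]]]].
      * destruct E0'; discriminate.
      * destruct G0; try discriminate.
        destruct G1 as [| | [] a]; try discriminate.
        injection HG1 as <-.
        destruct (Hsim _ _ Hx _ (eval_irreducible _ (value_irreducible (FVar x) I)))
          as [w [Hw _]].
        exact (Hdiv x w Hw).
  - destruct Hopen as [E0 [E1 [x [v0 [v1 [_ [_ [HE0 _]]]]]]]].
    destruct E0; discriminate.
Qed.

Theorem proposition2 :
  ctx_equiv (Shift tI) (App (Shift tI) tOmega) /\
  ~ nf_bisimilar (Shift tI) (App (Shift tI) tOmega).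
Proof.
  split.
  - apply discarding_shift_ctx_equiv; repeat split; cbn; auto.
  - apply shift_not_nf_bisimilar_app, app_omega_diverges.
Qed.
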